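(* (1) For any $r\ge0$ and odd primes $p_1,\ldots,p_r$ (not necessarily distinct), \[ \sum_{n=0}^{\infty}b_4\!\left(\prod_{s=1}^{r}p_s^2\,n+\frac{\prod_{s=1}^{r}p_s^2-1}{8}\right)q^n \equiv \psi(q) \pmod 2, \] where $\prod_{s=1}^{0}p_s^2=1$. (2) For any $r\ge1$, odd primes $p_1,\ldots,p_r$ and $n\ge0$, \[ b_4\!\left(\prod_{s=1}^{r}p_s^2\, n+\frac{(8i+p_{r})\prod_{s=1}^{r-1}p_s^2\,p_{r}-1}{8}\right)\equiv 0 \pmod 2 \] for each $i=1,2,\ldots,p_r-1$. (3) For any $r\ge1$, odd primes $p_1,\ldots,p_r$ and $n\ge0$, \[ b_4\!\left(\prod_{s=1}^{r-1}p_s^2\,p_{r}\, n+\frac{(8j+1)\prod_{s=1}^{r-1}p_s^2-1}{8}\right)\equiv 0 \pmod 2 \] for every integer $j$ with $0\le j\le p_r-1$ and $\left(\frac{8j+1}{p_r}\right)=-1$.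
   Context: For a positive integer $\ell$, $b_\ell(n)$ denotes the number of partitions of $n$ having no part divisible by $\ell$. $\psi(q)=\sum_{n\ge0}q^{n(n+1)/2}$. A congruence between power series modulo $2$ means coefficientwise congruence. $\left(\frac{a}{p}\right)$ is the Legendre symbol. *)

From mathcomp Require Import all_boot all_order all_algebra.
Set Implicit Arguments. Unset Strict Implicit. Unset Printing Implicit Defensive.

(* A partition of n is encoded by its multiplicity function m : part i |-> m i
   (i = 1..n; every multiplicity is <= n), with sum_i i * m i = n.
   b ell n = number of partitions of n with no part divisible by ell,
   i.e. multiplicity functions vanishing at 0 and at multiples of ell. *)
Definition b (ell n : nat) : nat :=
  #|[set m : {ffun 'I_n.+1 -> 'I_n.+1} |
      (\sum_(i < n.+1) (i : nat) * (m i : nat) == n) &&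
      [forall i : 'I_n.+1, ((i : nat) == 0) || (ell %| i) ==> ((m i : nat) == 0)]]|.

(* n-th coefficient of psi(q) = sum_{k>=0} q^{k(k+1)/2}: the number of k >= 0
   with k(k+1)/2 = n (necessarily k <= n). *)
Definition psi_coef (n : nat) : nat :=
  #|[set k : 'I_n.+1 | ((k : nat) * (k : nat).+1)./2 == n]|.

Definition legendre (a p : nat) : int :=
  if p %| a then Posz 0
  else if [exists x : 'I_p, (x : nat) ^ 2 == a %[mod p]] then Posz 1 else Negz 0.

Definition odd_prime (p : nat) : bool := prime p && odd p.

From mathcomp Require Import all_boot all_algebra zify ring.
Set Implicit Arguments. Unset Strict Implicit. Unset Printing Implicit Defensive.
Import GRing.Theory.

(* Modulo 2, sum_n b_4(n) q^n = f_4 / f_1 = (q; q^2)_oo (q^4; q^4)_oo by Euler's identity, and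
   the Jacobi triple product, obtained from Rothe's finite q-binomial theorem at base q^4,
   identifies this product with psi(q).  Everything is computed with polynomials over F_2
   modulo X^(n+1).  Hence b_4(m) is odd iff 8m+1 is a square, and the three congruences are
   statements about squares: multiplying by an odd square s^2 preserves squareness (1), a square
   divisible by p is divisible by p^2 (2), and a square is a quadratic residue mod p (3). *)

Local Open Scope ring_scope.

Definition eqmodX (R : fieldType) (L : nat) (p q : {poly R}) := 'X^L %| p - q.

Notation "p = q %[modX L ]" := (eqmodX L p q)
  (at level 70, q at next level, format "p  =  q  %[modX  L ]").

Section TruncatedCongruence.

Variable R : fieldType.
Implicit Types (p q r c : {poly R}) (L k : nat).

Lemma eqmodX_refl L p : p = p %[modX L].
Proof. by rewrite /eqmodX subrr dvdp0. Qed.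

Lemma eqmodX_sym L p q : p = q %[modX L] -> q = p %[modX L].
Proof. by rewrite /eqmodX -opprB dvdpNr. Qed.

Lemma eqmodX_trans L p q r : p = q %[modX L] -> q = r %[modX L] -> p = r %[modX L].
Proof. by move=> pq qr; rewrite /eqmodX -(subrKA q); apply: dvdp_add. Qed.

Lemma eqmodXD L p q p' q' :
  p = p' %[modX L] -> q = q' %[modX L] -> p + q = p' + q' %[modX L].
Proof. by move=> pp' qq'; rewrite /eqmodX opprD addrACA; apply: dvdp_add. Qed.

Lemma eqmodXM L p q p' q' :
  p = p' %[modX L] -> q = q' %[modX L] -> p * q = p' * q' %[modX L].
Proof.
move=> pp' qq'; rewrite /eqmodX -(subrKA (p' * q)) -mulrBl -mulrBr.
by apply: dvdp_add; [apply: dvdp_mulr | apply: dvdp_mull].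
Qed.

Lemma eqmodX_coef L p q i : p = q %[modX L] -> (i < L)%N -> p`_i = q`_i.
Proof.
move=> pq iL; apply/eqP; rewrite -subr_eq0 -coefB.
by rewrite -(divpK pq) coefMXn iL.
Qed.

Lemma eqmodX_mul2l L c p q :
  c.[0] != 0 -> c * p = c * q %[modX L] -> p = q %[modX L].
Proof.
rewrite /eqmodX -mulrBr => c0 dvd_cpq.
have cop : coprimep 'X^L c.
  rewrite coprimep_sym coprimep_expr //.
  by rewrite -[X in coprimep _ X]subr0 coprimep_XsubC rootE c0.
by rewrite -(Gauss_dvdpr _ cop).
Qed.

Lemma eqmodX_Xn0 L k : (L <= k)%N -> ('X^k : {poly R}) = 0 %[modX L].
Proof. by move=> Lk; rewrite /eqmodX subr0 dvdp_exp2l. Qed.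

Lemma eqmodX_1Xn L k : (L <= k)%N -> 1 + ('X^k : {poly R}) = 1 %[modX L].
Proof.
by move=> Lk; rewrite -[X in _ = X %[modX _]]addr0 eqmodXD ?eqmodX_refl ?eqmodX_Xn0.
Qed.

Lemma eqmodX_prod L (I : Type) (r : seq I) (P : pred I) (F G : I -> {poly R}) :
  (forall i, P i -> F i = G i %[modX L]) ->
  \prod_(i <- r | P i) F i = \prod_(i <- r | P i) G i %[modX L].
Proof.
move=> FG; apply: (big_ind2 (eqmodX L)) => //; first exact: eqmodX_refl.
by move=> ? ? ? ?; apply: eqmodXM.
Qed.

Lemma eqmodX_sum L (I : Type) (r : seq I) (P : pred I) (F G : I -> {poly R}) :
  (forall i, P i -> F i = G i %[modX L]) ->
  \sum_(i <- r | P i) F i = \sum_(i <- r | P i) G i %[modX L].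
Proof.
move=> FG; apply: (big_ind2 (eqmodX L)) => //; first exact: eqmodX_refl.
by move=> ? ? ? ?; apply: eqmodXD.
Qed.

End TruncatedCongruence.

Lemma big_ord_double (R : comRingType) (h : nat -> R) K :
  \prod_(i < 2 * K) h i = \prod_(j < K) (h (2 * j)%N * h (2 * j).+1%N).
Proof.
elim: K => [|K IH]; first by rewrite !big_ord0.
by rewrite mulnS !big_ord_recr /= IH mulrA.
Qed.

Fixpoint qbin (R : comRingType) (y : R) (n k : nat) : R :=
  match n, k with
  | 0, 0 => 1
  | 0, _.+1 => 0
  | n'.+1, 0 => 1
  | n'.+1, k'.+1 => qbin y n' k' + y ^+ k'.+1 * qbin y n' k'.+1
  end.

Section GaussianBinomial.

Variables (R : comRingType) (y : R).

Lemma qbinSS n k : qbin y n.+1 k.+1 = qbin y n k + y ^+ k.+1 * qbin y n k.+1.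
Proof. by []. Qed.

Lemma qbin0 n : qbin y n 0 = 1.
Proof. by case: n. Qed.

Lemma qbin_small n k : (n < k)%N -> qbin y n k = 0.
Proof. by elim: n k => [|n IH] [|k] //= nk; rewrite !IH ?mulr0 ?addr0 //; lia. Qed.

#[global] Arguments qbin : simpl never.

Lemma qbinomial a b n :
  \prod_(i < n) (b + a * y ^+ i) =
  \sum_(k < n.+1) qbin y n k * y ^+ 'C(k, 2) * a ^+ k * b ^+ (n - k).
Proof.
elim: n a => [|n IH] a; first by rewrite big_ord0 big_ord1 /= qbin0 !expr0 !mulr1.
rewrite big_ord_recl /= expr0 mulr1.
under eq_bigr => i _ do rewrite /bump /= add1n exprS mulrA.
rewrite IH mulrDl !big_distrr /=.
rewrite [in RHS]big_ord_recl /= qbin0 !expr0 !mulr1 subn0.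
under [in RHS]eq_bigr => i _ do rewrite /bump /= add1n qbinSS !mulrDl.
rewrite big_split /= [X in _ = _ + X]addrC addrA; congr (_ + _); last first.
  by apply: eq_bigr => i _; rewrite binS bin1 exprD exprMn exprS subSS; ring.
rewrite big_ord_recl /= qbin0 !expr0 !mulr1 subn0 !mul1r -exprS; congr (_ + _).
rewrite big_ord_recr /= qbin_small // !mulr0 !mul0r addr0.
apply: eq_bigr => i _; rewrite /bump /= add1n subSS binS bin1 exprD exprMn exprS.
by rewrite -(subnSK (ltn_ord i)) [b ^+ _.+1]exprS; ring.
Qed.

Definition qpoch n := \prod_(i < n) (1 - y ^+ i.+1).

Lemma qpochS n : qpoch n.+1 = qpoch n * (1 - y ^+ n.+1).
Proof. by rewrite /qpoch big_ord_recr. Qed.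

Lemma qbin_qpoch n k : (k <= n)%N -> qbin y n k * qpoch k * qpoch (n - k) = qpoch n.
Proof.
elim: n k => [|n IH] [|k] //; first by rewrite qbin0 /qpoch !big_ord0 !mulr1.
  by rewrite qbin0 subn0 /qpoch big_ord0 !mul1r.
rewrite ltnS subSS => kn; have IHk := IH k kn.
rewrite qbinSS [in RHS]qpochS; case: (ltngtP k n) kn => // [kn | ekn] _; last first.
  subst k; rewrite (qbin_small (ltnSn n)) mulr0 addr0 -[X in _ = X * _]IHk qpochS; ring.
have [m em] : exists m, n = (k + m.+1)%N by exists (n - k).-1; lia.
have IHk1 := IH k.+1 kn.
rewrite em (_ : (k + m.+1 - k = m.+1)%N) ?qpochS in IHk *; last lia.
rewrite em (_ : (k + m.+1 - k.+1 = m)%N) ?qpochS in IHk1; last lia.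
rewrite -addSn exprD; set A := qbin y _ k in IHk *; set B := qbin y _ k.+1 in IHk1 *.
transitivity ((1 - y ^+ k.+1) * (A * qpoch k * (qpoch m * (1 - y ^+ m.+1))) +
  y ^+ k.+1 * (1 - y ^+ m.+1) * (B * (qpoch k * (1 - y ^+ k.+1)) * qpoch m)); first by ring.
by rewrite IHk IHk1; ring.
Qed.

End GaussianBinomial.

Local Notation poly2 := {poly 'F_2}.

Lemma pchar_poly2 : 2%N \in [pchar poly2].
Proof. by rewrite inE /=; apply/eqP; rewrite -polyC_natr pchar_Fp_0. Qed.

Lemma sqr_1Xn k : (1 + 'X^k : poly2) ^+ 2 = 1 + 'X^(2 * k).
Proof.
by rewrite sqrrD expr1n mul1r mulr2n (addrr_pchar2 pchar_poly2) addr0 -exprM mulnC.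
Qed.

Lemma horner0_1Xn k : (0 < k)%N -> (1 + 'X^k : poly2).[0] = 1.
Proof. by move=> k0; rewrite hornerD hornerXn hornerC expr0n eqn0Ngt k0 addr0. Qed.

(* Modulo 2, [Q_all c N] and [Q_odd c N] are (q^c; q^c)_N and (q^c; q^2c)_N. *)
Definition Q_all c N : poly2 := \prod_(j < N) (1 + 'X^(c * j.+1)).
Definition Q_odd c N : poly2 := \prod_(j < N) (1 + 'X^(c * (2 * j).+1)).

Lemma Q_all_sqr c N : Q_all c N ^+ 2 = Q_all (2 * c) N.
Proof. by rewrite /Q_all -prodrXl; apply: eq_bigr => j _; rewrite sqr_1Xn mulnA. Qed.

Lemma Q_odd_sqr c N : Q_odd c N ^+ 2 = Q_odd (2 * c) N.
Proof. by rewrite /Q_odd -prodrXl; apply: eq_bigr => j _; rewrite sqr_1Xn mulnA. Qed.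

Lemma Q_all_double c N : Q_all c (2 * N) = Q_odd c N * Q_all (2 * c) N.
Proof.
rewrite /Q_all (big_ord_double (fun j => 1 + 'X^(c * j.+1))) /Q_odd -big_split /=.
by apply: eq_bigr => j _; congr (_ * (1 + 'X^_)); lia.
Qed.

Lemma horner0_Q_all c N : (0 < c)%N -> (Q_all c N).[0] != 0.
Proof.
by move=> c0; rewrite horner_prod big1 ?oner_neq0 // => j _; apply: horner0_1Xn; lia.
Qed.

Lemma Q_all_trunc L c N N' :
  (L <= c * N.+1)%N -> (N <= N')%N -> Q_all c N' = Q_all c N %[modX L].
Proof.
move=> LcN /subnK <-; elim: (N' - N)%N => [|d IH]; first exact: eqmodX_refl.
rewrite addSn /Q_all big_ord_recr /= -[X in _ = X %[modX _]]mulr1.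
by apply: eqmodXM IH _; apply: eqmodX_1Xn; apply: leq_trans LcN _; rewrite leq_mul2l; lia.
Qed.

Lemma Q_odd_trunc L c N N' :
  (L <= c * (2 * N).+1)%N -> (N <= N')%N -> Q_odd c N' = Q_odd c N %[modX L].
Proof.
move=> LcN /subnK <-; elim: (N' - N)%N => [|d IH]; first exact: eqmodX_refl.
rewrite addSn /Q_odd big_ord_recr /= -[X in _ = X %[modX _]]mulr1.
by apply: eqmodXM IH _; apply: eqmodX_1Xn; apply: leq_trans LcN _; rewrite leq_mul2l; lia.
Qed.

(* Euler: Q_all c (2N) = Q_odd c N * Q_all c N ^+ 2, and Q_all c may be cancelled. *)
Lemma Q_odd_Q_all L c N : (0 < c)%N -> (L <= c * N.+1)%N ->
  Q_odd c N * Q_all c N = 1 %[modX L].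
Proof.
move=> c0 LcN; apply: (@eqmodX_mul2l _ _ (Q_all c N)); first exact: horner0_Q_all.
rewrite mulr1 mulrCA -expr2 Q_all_sqr -Q_all_double.
by apply: Q_all_trunc => //; lia.
Qed.

Lemma qpoch_X4 n : qpoch ('X^4 : poly2) n = Q_all 4 n.
Proof.
by apply: eq_bigr => i _; rewrite (GRing.subr_pchar2 pchar_poly2) -exprM.
Qed.

Lemma qbin_Q_all L N k M N' : (L <= 4 * M.+1)%N -> (M <= k)%N -> (M <= N - k)%N ->
  (k <= N)%N -> (M <= N')%N -> qbin 'X^4 N k * Q_all 4 N' = 1 %[modX L].
Proof.
move=> LM Mk MNk kN MN'.
have e := qbin_qpoch ('X^4 : poly2) kN; rewrite !qpoch_X4 in e.
have QM N1 : (M <= N1)%N -> Q_all 4 N1 = Q_all 4 M %[modX L] by apply: Q_all_trunc.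
apply: (@eqmodX_trans _ _ _ (qbin 'X^4 N k * Q_all 4 M)).
  by apply: eqmodXM (eqmodX_refl _ _) (QM _ MN').
apply: (@eqmodX_mul2l _ _ (Q_all 4 M)); first exact: horner0_Q_all.
rewrite mulr1 mulrCA; apply: (eqmodX_trans _ (QM N _)); last lia.
rewrite -{}e -mulrA; apply: eqmodXM (eqmodX_refl _ _) _.
by apply: eqmodXM; apply: eqmodX_sym; apply: QM.
Qed.

Definition tri t := (t * t.+1)./2.

Lemma double_tri t : (2 * tri t = t * t.+1)%N.
Proof. by rewrite /tri mul2n halfK oddM andbN subn0. Qed.

Lemma double_bin2 x : (2 * 'C(x, 2) = x * x.-1)%N.
Proof. by rewrite bin2 mul2n halfK oddM; case: x => //= x; rewrite andNb subn0. Qed.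

Lemma leq_tri t : (t <= tri t)%N.
Proof. by have := double_tri t; case: t => // t; nia. Qed.

Lemma tri_inj : injective tri.
Proof.
move=> a c e; have := double_tri a; have := double_tri c; rewrite e => ha hc.
by case: (ltngtP a c) => // ac; [have := ltn_mul ac ac | have := ltn_mul ac ac]; lia.
Qed.

(* [k |-> tri (idx N k)] maps 0..2N onto the triangular numbers T_0..T_2N,
   hitting T_2d at k = N - d and T_(2d+1) at k = N + d + 1. *)
Definition idx N k := if (k < N)%N then (2 * (N - k))%N else (2 * (k - N) - 1)%N.

(* Where the Gaussian exponents of [qbinomial] become triangular numbers. *)
Lemma idx_exponent N k : (k <= 2 * N)%N ->
  (4 * 'C(N, 2) + N * (4 * N - 1) + tri (idx N k) =
   4 * 'C(k, 2) + (4 * N - 1) * (2 * N - k))%N.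
Proof.
move=> k2N.
suff : (4 * (N * N.-1) + 2 * (N * (4 * N - 1)) + idx N k * (idx N k).+1 =
        4 * (k * k.-1) + 2 * ((4 * N - 1) * (2 * N - k)))%N.
  by rewrite -!double_bin2 -double_tri; lia.
rewrite /idx; case: (ltnP k N) => [kN | Nk].
  have [d ->] : exists d, N = (k + d.+1)%N by exists (N - k).-1; lia.
  have -> : (2 * (k + d.+1 - k) = 2 * d.+1)%N by lia.
  have -> : (4 * (k + d.+1) - 1 = 4 * k + 4 * d + 3)%N by lia.
  have -> : (2 * (k + d.+1) - k = k + 2 * d + 2)%N by lia.
  by rewrite addnS /=; case: k {k2N kN} => [|k] /=; ring.
have [m km] : exists m, k = (N + m)%N by exists (k - N)%N; lia.
subst k; have mN : (m <= N)%N by lia.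
have -> : (N + m - N = m)%N by lia.
have -> : (2 * N - (N + m) = N - m)%N by lia.
have [e ->] : exists e, N = (m + e)%N by exists (N - m)%N; lia.
have -> : (m + e - m = e)%N by lia.
clear Nk k2N mN; case: m => [|m]; case: e => [|e] //.
- rewrite !add0n addn0 /= (_ : (4 * e.+1 - 1 = 4 * e + 3)%N); last lia.
  by rewrite (_ : (2 * 0 - 1 = 0)%N) //; ring.
- rewrite addn0 (_ : (4 * m.+1 - 1 = 4 * m + 3)%N); last lia.
  rewrite (_ : (2 * m.+1 - 1 = 2 * m + 1)%N); last lia.
  by rewrite (_ : ((m.+1 + m.+1).-1 = 2 * m + 1)%N) /=; [ring | lia].
- rewrite (_ : (4 * (m.+1 + e.+1) - 1 = 4 * m + 4 * e + 7)%N); last lia.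
  rewrite (_ : (2 * m.+1 - 1 = 2 * m + 1)%N); last lia.
  rewrite (_ : ((m.+1 + e.+1 + m.+1).-1 = 2 * m + e + 2)%N); last lia.
  by rewrite (_ : ((m.+1 + e.+1).-1 = m + e + 1)%N); [ring | lia].
Qed.

Lemma sum_exponents N :
  (\sum_(j < N) 4 * (N - j.+1) + \sum_(j < N) (4 * N - 1) =
   4 * 'C(N, 2) + N * (4 * N - 1))%N.
Proof.
rewrite sum_nat_const card_ord; congr (_ + _)%N.
elim: N => [|N IH]; first by rewrite big_ord0.
rewrite big_ord_recl /= subSS subn0 binS bin1.
by under eq_bigr => i _ do rewrite /bump /= add1n subSS; rewrite IH; lia.
Qed.

Lemma Q_odd1_double N : Q_odd 1 (2 * N) =
  \prod_(j < N) (1 + 'X^(4 * j + 1)) * \prod_(j < N) (1 + 'X^(4 * j + 3)).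
Proof.
rewrite /Q_odd (big_ord_double (fun j => 1 + 'X^(1 * (2 * j).+1))) -big_split /=.
by apply: eq_bigr => j _; congr ((1 + 'X^_) * (1 + 'X^_)); lia.
Qed.

Lemma prod_shifted_X4 N : \prod_(i < 2 * N) ('X^(4 * N - 1) + 1 * 'X^4 ^+ i) =
  'X^(4 * 'C(N, 2) + N * (4 * N - 1)) * Q_odd 1 (2 * N) :> poly2.
Proof.
rewrite [in LHS](_ : (2 * N = N + N)%N); last lia.
rewrite big_split_ord /= (reindex_inj rev_ord_inj) /=.
rewrite (eq_bigr (fun i : 'I_N => 'X^(4 * (N - i.+1)) * (1 + 'X^(4 * i + 3)))); last first.
  move=> i _; rewrite mul1r -exprM mulrDr mulr1 -exprD addrC.
  by congr (_ + 'X^_); have := ltn_ord i; lia.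
rewrite [X in _ * X = _](eq_bigr (fun i : 'I_N => 'X^(4 * N - 1) * (1 + 'X^(4 * i + 1)))); last first.
  move=> i _; rewrite mul1r -exprM mulrDr mulr1 -exprD.
  by congr (_ + 'X^_); have := ltn_ord i; lia.
rewrite big_split [X in _ * X = _]big_split /= !prodrXr Q_odd1_double -sum_exponents exprD.
ring.
Qed.

(* Finite Jacobi triple product modulo 2. *)
Lemma Q_odd1_jacobi N :
  Q_odd 1 (2 * N) = \sum_(k < (2 * N).+1) qbin 'X^4 (2 * N) k * 'X^(tri (idx N k)).
Proof.
have X0 : ('X^(4 * 'C(N, 2) + N * (4 * N - 1)) : poly2) != 0.
  by rewrite -size_poly_eq0 size_polyXn.
apply: (mulfI X0); rewrite -prod_shifted_X4 qbinomial big_distrr /=.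
apply: eq_bigr => k _; rewrite expr1n mulr1 -!exprM mulrCA -exprD idx_exponent.
  by rewrite exprD mulrA.
by rewrite -ltnS.
Qed.

Lemma Q_odd1_Q_all4 n (N := (2 * n).+1) :
  Q_odd 1 (2 * N) * Q_all 4 N = \sum_(k < (2 * N).+1) 'X^(tri (idx N k)) %[modX n.+1].
Proof.
rewrite Q_odd1_jacobi big_distrl; apply: eqmodX_sum => k _ /=; rewrite mulrAC.
have [nt | tn] := leqP n.+1 (tri (idx N k)).
  apply: eqmodX_trans (eqmodXM (eqmodX_refl _ _) (eqmodX_Xn0 _ nt)) _.
  by rewrite mulr0; apply/eqmodX_sym/eqmodX_Xn0.
rewrite -[X in _ = X %[modX _]]mul1r; apply: eqmodXM (eqmodX_refl _ _).
have k2N : (k <= 2 * N)%N by rewrite -ltnS.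
have : (idx N k <= n)%N by apply: leq_trans (leq_tri _) _; rewrite -ltnS.
by rewrite /N /idx in k2N *; case: ltnP => kN idx_n; apply: (@qbin_Q_all _ _ _ n); lia.
Qed.

Definition part_allowed n (i j : 'I_n.+1) : bool :=
  ((i == 0 :> nat) || (4 %| i)%N) ==> (j == 0 :> nat).

(* Factor [i] sums over the multiplicity [j] of the part [i]. *)
Definition b4_poly n : poly2 :=
  \prod_(i < n.+1) \sum_(j < n.+1) (if part_allowed i j then 'X^(i * j) else 0).

Lemma prod_if_Xn (I : finType) (c : pred I) (g : I -> nat) :
  \prod_(i : I) (if c i then 'X^(g i) else 0 : poly2) =
  if [forall i, c i] then 'X^(\sum_(i : I) g i) else 0.
Proof.
case: (boolP [forall i, c i]) => [/forallP ci | /forallPn [i nci]].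
  by rewrite -prodrXr; apply: eq_bigr => i _; rewrite ci.
by rewrite (bigD1 i) //= (negbTE nci) mul0r.
Qed.

Lemma coef_b4_poly n : (b4_poly n)`_n = (b 4 n)%:R.
Proof.
rewrite /b4_poly bigA_distr_bigA /= coef_sum.
under eq_bigr => f _ do rewrite (prod_if_Xn (fun i => part_allowed i (f i)) (fun i => i * f i)%N).
rewrite (eq_bigr (fun f : {ffun 'I_n.+1 -> 'I_n.+1} =>
   if [forall i, part_allowed i (f i)] && ((\sum_(i < n.+1) i * f i)%N == n) then 1 else 0)).
  by rewrite -big_mkcond sumr_const /b; congr (_ *+ _); apply: eq_card => f; rewrite !inE andbC.
by move=> f _; case: ifP => _; rewrite ?coef0 // coefXn eq_sym; case: eqP.
Qed.

Definition H_factor i : poly2 := if (i != 0)%N && ~~ (4 %| i)%N then 1 + 'X^i else 1.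
Definition H_poly n : poly2 := \prod_(i < n.+1) H_factor i.

Lemma sum_if_ord0 n (F : 'I_n.+1 -> poly2) (c : pred 'I_n.+1) :
  (forall j, c j = (j == 0 :> nat)) -> \sum_(j < n.+1) (if c j then F j else 0) = F ord0.
Proof.
move=> cE; rewrite (bigD1 ord0) //= cE eqxx big1 ?addr0 // => j /negbTE j0.
by rewrite cE -[_ == _ :> nat]/(j == ord0) j0.
Qed.

(* Mod 2 the allowed factor is the geometric sum (1 - X^(i (n+1))) / (1 - X^i). *)
Lemma b4_factor_H_factor n (i : 'I_n.+1) :
  (\sum_(j < n.+1) (if part_allowed i j then 'X^(i * j) else 0)) * H_factor i
  = 1 %[modX n.+1].
Proof.
rewrite /H_factor /part_allowed.
have [i0 | i_gt0] := posnP i.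
  by rewrite i0 /= sum_if_ord0 ?muln0 ?mulr1; [exact: eqmodX_refl | move=> j].
case: (boolP (4 %| i)%N) => i4 /=.
  by rewrite sum_if_ord0 ?muln0 ?mulr1; [exact: eqmodX_refl | move=> j].
rewrite (eq_bigr (fun j : 'I_n.+1 => 'X^i ^+ j)); last first.
  by move=> j _; rewrite exprM.
rewrite mulrC addrC -(GRing.subr_pchar2 pchar_poly2) -subrX1 -exprM.
rewrite (GRing.subr_pchar2 pchar_poly2) addrC; apply: eqmodX_1Xn.
by rewrite leq_pmull.
Qed.

Lemma b4_poly_H_poly n : b4_poly n * H_poly n = 1 %[modX n.+1].
Proof.
rewrite /b4_poly /H_poly -big_split /=.
apply: (@eqmodX_trans _ _ _ (\prod_(i < n.+1) 1)); last by rewrite big1_eq; exact: eqmodX_refl.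
by apply: eqmodX_prod => i _; apply: b4_factor_H_factor.
Qed.

Lemma prod_H_factor K : \prod_(i < 4 * K) H_factor i = Q_odd 1 (2 * K) * Q_odd 2 K.
Proof.
rewrite (_ : (4 * K = 2 * (2 * K))%N); last lia.
rewrite (big_ord_double H_factor).
rewrite (big_ord_double (fun j => H_factor (2 * j)%N * H_factor (2 * j).+1%N)).
rewrite Q_odd1_double /Q_odd -!big_split /=; apply: eq_bigr => j _.
have H1 (m : nat) : (m != 0)%N -> ~~ (4 %| m)%N -> H_factor m = 1 + 'X^m.
  by rewrite /H_factor => -> ->.
rewrite {1}/H_factor (_ : (4 %| 2 * (2 * j))%N) ?andbF ?mul1r; last by rewrite mulnA dvdn_mulr.
rewrite !H1 //; try lia.
have -> : ((2 * (2 * j)).+1 = 4 * j + 1)%N by lia.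
have -> : ((2 * (2 * j).+1).+1 = 4 * j + 3)%N by lia.
ring.
Qed.

Lemma H_poly_Q_odd n K : (n < 4 * K)%N -> H_poly n = Q_odd 1 (2 * K) * Q_odd 2 K %[modX n.+1].
Proof.
move=> nK; rewrite -prod_H_factor (_ : (4 * K = n.+1 + (4 * K - n.+1))%N); last lia.
rewrite big_split_ord /= -[X in X = _ %[modX _]]mulr1.
apply: eqmodXM (eqmodX_refl _ _) _; apply: eqmodX_sym.
apply: (@eqmodX_trans _ _ _ (\prod_(j < 4 * K - n.+1) 1)).
  by apply: eqmodX_prod => j _; rewrite /H_factor; case: ifP => _;
    [apply: eqmodX_1Xn; rewrite leq_addr | exact: eqmodX_refl].
by rewrite big1_eq; exact: eqmodX_refl.
Qed.

Lemma horner0_H_poly n : (H_poly n).[0] != 0.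
Proof.
rewrite horner_prod big1 ?oner_neq0 // => i _; rewrite /H_factor.
by case: ifP => [/andP[i0 _] | _]; [rewrite horner0_1Xn ?lt0n | rewrite hornerC].
Qed.

(* Mod 2, sum_n b_4(n) q^n = f_4 / f_1 = (q; q^2)_oo (q^4; q^4)_oo = psi(q). *)
Lemma b4_poly_theta n (N := (2 * n).+1) :
  b4_poly n = \sum_(k < (2 * N).+1) 'X^(tri (idx N k)) %[modX n.+1].
Proof.
apply: (@eqmodX_mul2l _ _ (H_poly n)); first exact: horner0_H_poly.
apply: (@eqmodX_trans _ _ _ 1); first by rewrite mulrC; exact: b4_poly_H_poly.
have HQ : H_poly n = Q_odd 1 (2 * N) * Q_odd 2 N %[modX n.+1] by apply: H_poly_Q_odd; lia.
apply: eqmodX_sym; apply: eqmodX_trans (eqmodXM HQ (eqmodX_sym (Q_odd1_Q_all4 n))) _.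
rewrite mulrACA -expr2 Q_odd_sqr.
have Q2 : Q_odd 2 (2 * N) = Q_odd 2 N %[modX n.+1] by apply: Q_odd_trunc => //; lia.
apply: eqmodX_trans (eqmodXM Q2 (eqmodX_refl _ _)) _.
by rewrite mulrA -expr2 Q_odd_sqr; apply: Q_odd_Q_all => //; lia.
Qed.

Local Close Scope ring_scope.

Lemma card_le1_eq (T1 T2 : finType) (A : {set T1}) (B : {set T2}) :
  #|A| <= 1 -> #|B| <= 1 -> (A != set0 <-> B != set0) -> #|A| = #|B|.
Proof.
have cardE (T : finType) (X : {set T}) : #|X| <= 1 -> #|X| = (X != set0) :> nat.
  by rewrite -card_gt0; case: #|X| => [|[|]].
move=> A1 B1 [AB BA]; rewrite (cardE _ A) // (cardE _ B) //.
by congr nat_of_bool; apply/idP/idP => [/AB | /BA].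
Qed.

Lemma idx_inj N : injective (idx N).
Proof. by move=> k l; rewrite /idx; case: ltnP => kN; case: ltnP => lN; lia. Qed.

Lemma idx_onto N t : t <= 2 * N -> exists2 k, k <= 2 * N & idx N k = t.
Proof.
move=> t2N; have := odd_double_half t; case: (odd t) => /= tE.
  by exists (N + t./2 + 1); rewrite /idx; case: ltnP; lia.
by exists (N - t./2); rewrite /idx; case: ltnP; lia.
Qed.

Lemma psi_coef_le1 m : psi_coef m <= 1.
Proof.
apply/card_le1_eqP => x y; rewrite !inE => /eqP xm /eqP ym.
by apply: val_inj; apply: tri_inj; rewrite /tri xm ym.
Qed.

Lemma card_theta_coef n (N := (2 * n).+1) :
  #|[set k : 'I_(2 * N).+1 | tri (idx N k) == n]| = psi_coef n.
Proof.
apply: card_le1_eq; [|exact: psi_coef_le1|].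
  apply/card_le1_eqP => x y; rewrite !inE => /eqP xn /eqP yn.
  by apply/val_inj/(@idx_inj N)/tri_inj; rewrite xn yn.
split; case/set0Pn => x; rewrite inE => /eqP xn; apply/set0Pn.
  have x_lt : idx N x < n.+1 by have := leq_tri (idx N x); lia.
  by exists (Ordinal x_lt); rewrite inE /=; apply/eqP.
have [|k k2N kx] := @idx_onto N x; first by have := leq_tri x; rewrite /tri; lia.
by exists (Ordinal (k2N : k < (2 * N).+1)); rewrite inE /= kx /tri xn.
Qed.

Lemma b4_psi_coef_mod2 n : b 4 n = psi_coef n %[mod 2].
Proof.
rewrite -!(val_Fp_nat (isT : prime 2)); congr (val _).
rewrite -coef_b4_poly (eqmodX_coef (b4_poly_theta n)) // coef_sum -card_theta_coef.
rewrite (eq_bigr (fun k : 'I_(2 * (2 * n).+1).+1 =>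
  if tri (idx (2 * n).+1 k) == n then 1 else 0)%R).
  by rewrite -big_mkcond sumr_const cardsE.
by move=> k _; rewrite coefXn eq_sym; case: eqP.
Qed.

Definition is_square x := exists y, y ^ 2 = x.

Lemma tri_is_square m : (exists t, tri t = m) <-> is_square (8 * m + 1).
Proof.
have sqrE t : (2 * t + 1) ^ 2 = 4 * (t * t.+1) + 1 by ring.
split=> [[t tm] | [y ym]].
  by exists (2 * t + 1); rewrite sqrE -tm -double_tri; lia.
have y_odd : odd y by have := congr1 odd ym; rewrite oddX oddD oddM.
have := odd_double_half y; rewrite y_odd -mul2n addnC => yE.
exists y./2; have := sqrE y./2; rewrite yE ym -double_tri; lia.
Qed.

Lemma psi_coef_gt0 m : 0 < psi_coef m <-> is_square (8 * m + 1).
Proof.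
rewrite -tri_is_square card_gt0; split.
  by case/set0Pn => t; rewrite inE => /eqP tm; exists t.
case=> t tm; apply/set0Pn.
have t_lt : t < m.+1 by have := leq_tri t; lia.
by exists (Ordinal t_lt); rewrite inE /=; apply/eqP.
Qed.

Lemma psi_coef_eq0 m : ~ is_square (8 * m + 1) -> psi_coef m = 0.
Proof. by move=> nsq; apply/eqP; rewrite -leqn0 leqNgt; apply/negP => /psi_coef_gt0. Qed.

Lemma psi_coef_eq m m' :
  (is_square (8 * m + 1) <-> is_square (8 * m' + 1)) -> psi_coef m = psi_coef m'.
Proof.
have psiE k : psi_coef k = (0 < psi_coef k) :> nat.
  by have := psi_coef_le1 k; case: (psi_coef k) => [|[|]].
move=> sq_mm'; rewrite psiE [RHS]psiE; congr nat_of_bool.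
by apply/idP/idP => /psi_coef_gt0 /sq_mm' /psi_coef_gt0.
Qed.

Lemma is_square_mul_sqr s x : 0 < s -> is_square (s ^ 2 * x) <-> is_square x.
Proof.
move=> s_gt0; split=> [[y ysx] | [y yx]]; last by exists (s * y); rewrite expnMn yx.
have : s ^ 2 %| y ^ 2 by rewrite ysx dvdn_mulr.
rewrite dvdn_pexp2r // => /dvdnP [z yE]; exists z.
by apply/eqP; rewrite -(@eqn_pmul2l (s ^ 2)) ?expn_gt0 ?s_gt0 // -ysx yE expnMn mulnC.
Qed.

Lemma prime_dvd_cofactor_square p x : prime p -> is_square (p * x) -> p %| x.
Proof.
move=> p_pr [y ypx]; have : p %| y ^ 2 by rewrite ypx dvdn_mulr.
rewrite Euclid_dvdX // andbT => /dvdnP [z yE].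
have : p * (z ^ 2 * p) = p * x by rewrite -ypx yE; ring.
by move/eqP; rewrite eqn_pmul2l ?prime_gt0 // => /eqP <-; apply: dvdn_mull.
Qed.

Lemma odd_sqr_mod8 y : odd y -> y ^ 2 %% 8 = 1.
Proof.
move=> y_odd; have := odd_double_half y; rewrite y_odd -mul2n => <-.
have [v [-> | ->]] : exists v, y./2 = 2 * v \/ y./2 = 2 * v + 1 by exists (y./2 %/ 2); lia.
  by rewrite (_ : (1 + 2 * (2 * v)) ^ 2 = (2 * v * v + v) * 8 + 1) ?modnMDl //; ring.
by rewrite (_ : (1 + 2 * (2 * v + 1)) ^ 2 = (2 * v * v + 3 * v + 1) * 8 + 1) ?modnMDl //; ring.
Qed.

Lemma odd_prime_coprime8 p : odd_prime p -> coprime p 8.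
Proof.
case/andP => p_pr p_odd; rewrite prime_coprime // (_ : 8 = 2 ^ 3) // Euclid_dvdX // andbT.
by apply: contraL p_odd => /(dvdn_leq (isT : 0 < 2)); have := prime_gt1 p_pr; lia.
Qed.

Lemma prod_odd_primes ps : all odd_prime ps ->
  \prod_(p <- ps) p ^ 2 = (\prod_(p <- ps) p) ^ 2 /\ odd (\prod_(p <- ps) p).
Proof.
elim: ps => [|p ps IH]; first by rewrite !big_nil.
rewrite !big_cons /= => /andP [/andP [_ p_odd] /IH [-> ps_odd]].
by rewrite expnMn oddM p_odd ps_odd.
Qed.

Lemma div8_shift A X : X %% 8 = 1 -> 8 * (A + (X - 1) %/ 8) + 1 = 8 * A + X.
Proof. lia. Qed.

Lemma b4_even m : ~ is_square (8 * m + 1) -> 2 %| b 4 m.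
Proof. by move=> nsq; rewrite /dvdn b4_psi_coef_mod2 psi_coef_eq0. Qed.

Lemma b4_odd_sqr_scaled s n : odd s ->
  b 4 (s ^ 2 * n + (s ^ 2 - 1) %/ 8) = psi_coef n %[mod 2].
Proof.
move=> s_odd; have s_gt0 : 0 < s by case: s s_odd.
rewrite b4_psi_coef_mod2; congr (_ %% 2); apply: psi_coef_eq.
rewrite div8_shift ?odd_sqr_mod8 // (_ : 8 * _ + _ = s ^ 2 * (8 * n + 1)); last by ring.
exact: is_square_mul_sqr.
Qed.

Lemma b4_even_mod_p2 s p n i : odd s -> odd_prime p -> 0 < i < p ->
  2 %| b 4 (s ^ 2 * p ^ 2 * n + ((8 * i + p) * s ^ 2 * p - 1) %/ 8).
Proof.
move=> s_odd p_oddpr ip; have s_gt0 : 0 < s by case: s s_odd.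
have /andP [p_pr p_odd] := p_oddpr.
apply: b4_even; rewrite div8_shift; last first.
  rewrite (_ : _ * p = i * s ^ 2 * p * 8 + (s * p) ^ 2); last by ring.
  by rewrite modnMDl odd_sqr_mod8 // oddM s_odd.
rewrite (_ : 8 * _ + _ = s ^ 2 * (p * (p * (8 * n + 1) + 8 * i))); last by ring.
move/(is_square_mul_sqr _ s_gt0)/(prime_dvd_cofactor_square p_pr).
rewrite (dvdn_addr _ (dvdn_mulr _ (dvdnn p))) Gauss_dvdr ?odd_prime_coprime8 // => /dvdn_leq.
lia.
Qed.

Lemma b4_even_nonresidue s p n j : odd s -> prime p ->
  legendre (8 * j + 1) p = Negz 0 ->
  2 %| b 4 (s ^ 2 * p * n + ((8 * j + 1) * s ^ 2 - 1) %/ 8).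
Proof.
move=> s_odd p_pr; have s_gt0 : 0 < s by case: s s_odd.
rewrite /legendre; case: ifP => // _; case: existsP => // no_root _.
apply: b4_even; rewrite div8_shift; last first.
  by rewrite (_ : _ * s ^ 2 = j * s ^ 2 * 8 + s ^ 2) ?modnMDl ?odd_sqr_mod8; last ring.
rewrite (_ : 8 * _ + _ = s ^ 2 * (8 * n * p + (8 * j + 1))); last by ring.
move/(is_square_mul_sqr _ s_gt0) => [y y_sq]; apply: no_root.
exists (Ordinal (ltn_pmod y (prime_gt0 p_pr))) => /=.
by rewrite modnXm y_sq modnMDl.
Qed.

Theorem theorem3p12 :
  (forall (ps : seq nat), all odd_prime ps ->
     forall n : nat,
       let P := \prod_(p <- ps) p ^ 2 in
       b 4 (P * n + (P - 1) %/ 8) = psi_coef n %[mod 2])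
  /\
  (forall (ps : seq nat) (p : nat), all odd_prime ps -> odd_prime p ->
     forall n i : nat, 1 <= i <= p - 1 ->
       let Q := \prod_(q <- ps) q ^ 2 in
       2 %| b 4 (Q * p ^ 2 * n + ((8 * i + p) * Q * p - 1) %/ 8))
  /\
  (forall (ps : seq nat) (p : nat), all odd_prime ps -> odd_prime p ->
     forall n j : nat, j <= p - 1 -> legendre (8 * j + 1) p = Negz 0 ->
       let Q := \prod_(q <- ps) q ^ 2 in
       2 %| b 4 (Q * p * n + ((8 * j + 1) * Q - 1) %/ 8)).
Proof.
split; [|split].
- move=> ps /prod_odd_primes [-> s_odd] n /=; exact: b4_odd_sqr_scaled.
- move=> ps p /prod_odd_primes [-> s_odd] p_oddpr n i i_range /=.
  apply: b4_even_mod_p2 => //; case/andP: p_oddpr => p_pr _.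
  by have := prime_gt1 p_pr; lia.
-
  move=> ps p /prod_odd_primes [-> s_odd] /andP [p_pr _] n j _ nonres /=.
  exact: b4_even_nonresidue.
Qed.
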